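(* (Soundness.) For every formula $\phi$ of the language $\Phi$: if $\vdash\phi$, then $h\Vdash\phi$ for every history $h$ of every regular epistemic transition system.
   Context: Fix a set of agents $\mathcal{A}$. A coalition is a subset of $\mathcal{A}$. The language $\Phi$ is given by $\phi ::= p \mid \neg\phi \mid \phi\to\phi \mid \mathsf{K}_C\phi \mid \mathsf{H}_C\phi$, where $p$ ranges over propositional variables and $C\subseteq\mathcal{A}$; $\bot,\top$ are defined as usual. Axioms: all propositional tautologies of $\Phi$ and (1) Truth: $\mathsf{K}_C\phi\to\phi$; (2) Negative Introspection: $\neg\mathsf{K}_C\phi\to\mathsf{K}_C\neg\mathsf{K}_C\phi$; (3) Distributivity: $\mathsf{K}_C(\phi\to\psi)\to(\mathsf{K}_C\phi\to\mathsf{K}_C\psi)$; (4) Monotonicity: $\mathsf{K}_C\phi\to\mathsf{K}_D\phi$ if $C\subseteq D$; (5) Strategic Positive Introspection: $\mathsf{H}_C\phi\to\mathsf{K}_C\mathsf{H}_C\phi$; (6) Cooperation: $\mathsf{H}_C(\phi\to\psi)\to(\mathsf{H}_D\phi\to\mathsf{H}_{C\cup D}\psi)$ where $C\cap D=\varnothing$; (7) Empty Coalition: $\mathsf{K}_\varnothing\phi\to\mathsf{H}_\varnothing\phi$; (8) Perfect Recall: $\mathsf{H}_D\phi\to\mathsf{H}_D\mathsf{K}_C\phi$ where $D\subseteq C\neq\varnothing$; (9) Unachievability of Falsehood: $\neg\mathsf{H}_C\bot$. $\vdash\phi$ means $\phi$ is derivable from the axioms using Necessitation ($\phi/\mathsf{K}_C\phi$),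 Strategic Necessitation ($\phi/\mathsf{H}_C\phi$) and Modus Ponens. An epistemic transition system is a tuple $(W,\{\sim_a\}_{a\in\mathcal{A}},V,M,\pi)$ with $W$ a set of states, each $\sim_a$ an equivalence relation on $W$, $V$ a nonempty set (domain of choices), $M\subseteq W\times V^{\mathcal{A}}\times W$, and $\pi$ mapping propositional variables to subsets of $W$. It is regular if for every $w\in W$ and $\mathbf{s}\in V^{\mathcal{A}}$ there is $w'$ with $(w,\mathbf{s},w')\in M$. A strategy profile of coalition $C$ is an element of $V^C$; for profiles $\mathbf{s}_1\in V^{C_1},\mathbf{s}_2\in V^{C_2}$ and $C\subseteq C_1\cap C_2$, $\mathbf{s}_1=_C\mathbf{s}_2$ means $(\mathbf{s}_1)_a=(\mathbf{s}_2)_a$ for all $a\in C$. $w\sim_C w'$ means $w\sim_a w'$ for all $a\in C$. A history is a sequence $(w_0,\mathbf{s}_1,w_1,\dots,\mathbf{s}_n,w_n)$, $n\ge0$, with $w_i\in W$, $\mathbf{s}_i\in V^{\mathcal{A}}$, $(w_i,\mathbf{s}_{i+1},w_{i+1})\in M$ for $i<n$; $hd(h)$ is its last element and $h::\mathbf{s}::w$ denotes extension by $\mathbf{s},w$. For histories $h=(w_0,\mathbf{s}_1,\dots,w_n)$, $h'=(w'_0,\mathbf{s}'_1,\dots,w'_m)$ and agent $a$, $h\approx_a h'$ iff $n=m$, $w_i\sim_a w'_i$ for all $i$, and $(\mathbf{s}_i)_a=(\mathbf{s}'_i)_a$ for all $i$; $h\approx_C h'$ iff $h\approx_a h'$ for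 all $a\in C$ (so $\approx_\varnothing$ relates any two histories). Satisfaction: $h\Vdash p$ iff $hd(h)\in\pi(p)$; Boolean clauses as usual; $h\Vdash\mathsf{K}_C\phi$ iff $h'\Vdash\phi$ for every history $h'$ with $h\approx_C h'$; $h\Vdash\mathsf{H}_C\phi$ iff there is $\mathbf{s}\in V^C$ such that for every history $h'::\mathbf{s}'::w'$ with $h\approx_C h'$ and $\mathbf{s}=_C\mathbf{s}'$ we have $h'::\mathbf{s}'::w'\Vdash\phi$. *)

From mathcomp Require Import all_boot.
From mathcomp Require Import boolp classical_sets.

Set Implicit Arguments.
Unset Strict Implicit.
Unset Printing Implicit Defensive.

Local Open Scope classical_set_scope.

Inductive formula (Agent : Type) : Type :=
| Var : nat -> formula Agent
| Neg : formula Agent -> formula Agent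
| Imp : formula Agent -> formula Agent -> formula Agent
| Kn  : set Agent -> formula Agent -> formula Agent
| Hw  : set Agent -> formula Agent -> formula Agent.

Arguments Var {Agent}.

Definition Bot {Agent : Type} : formula Agent := Neg (Imp (Var 0) (Var 0)).

Fixpoint peval {Agent : Type} (v : formula Agent -> bool) (f : formula Agent)
  : bool :=
  match f with
  | Var _ => v f
  | Neg g => ~~ peval v g
  | Imp g k => peval v g ==> peval v k
  | Kn _ _ => v f
  | Hw _ _ => v f
  end.

Definition tautology {Agent : Type} (f : formula Agent) : Prop :=
  forall v : formula Agent -> bool, peval v f.

Inductive derivable {Agent : Type} : formula Agent -> Prop :=
| D_taut f : tautology f -> derivable f
| D_truth C f : derivable (Imp (Kn C f) f)
| D_negintro C f : derivable (Imp (Neg (Kn C f)) (Kn C (Neg (Kn C f))))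
| D_distr C f g :
    derivable (Imp (Kn C (Imp f g)) (Imp (Kn C f) (Kn C g)))
| D_mono C D f : C `<=` D -> derivable (Imp (Kn C f) (Kn D f))
| D_spi C f : derivable (Imp (Hw C f) (Kn C (Hw C f)))
| D_coop C D f g : C `&` D = set0 ->
    derivable (Imp (Hw C (Imp f g)) (Imp (Hw D f) (Hw (C `|` D) g)))
| D_empty f : derivable (Imp (Kn set0 f) (Hw set0 f))
| D_recall C D f : D `<=` C -> C <> set0 ->
    derivable (Imp (Hw D f) (Hw D (Kn C f)))
| D_unach C : derivable (Neg (Hw C Bot))
| D_nec C f : derivable f -> derivable (Kn C f)
| D_snec C f : derivable f -> derivable (Hw C f)
| D_mp f g : derivable (Imp f g) -> derivable f -> derivable g.

Record ETS (Agent : Type) := {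
  W : Type;
  sim : Agent -> W -> W -> Prop;
  sim_refl : forall a w, sim a w w;
  sim_sym : forall a w w', sim a w w' -> sim a w' w;
  sim_trans : forall a w1 w2 w3, sim a w1 w2 -> sim a w2 w3 -> sim a w1 w3;
  V : Type;
  V_nonempty : inhabited V;
  M : W -> (Agent -> V) -> W -> Prop;
  pi : nat -> set W
}.

Arguments W {Agent}.
Arguments sim {Agent}.
Arguments V {Agent}.
Arguments M {Agent}.
Arguments pi {Agent}.

Definition regular {Agent : Type} (E : ETS Agent) : Prop :=
  forall (w : W E) (s : Agent -> V E), exists w' : W E, M E w s w'.

Section Histories.
Variables (Agent : Type) (E : ETS Agent).

(* Raw sequences (w0, s1, w1, ..., sn, wn), built by right extension. *)
Inductive hist : Type :=
| HInit : W E -> hist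
| HExt : hist -> (Agent -> V E) -> W E -> hist.

Definition hd (h : hist) : W E :=
  match h with HInit w => w | HExt _ _ w => w end.

Fixpoint is_history (h : hist) : Prop :=
  match h with
  | HInit _ => True
  | HExt h' s w => is_history h' /\ M E (hd h') s w
  end.

Fixpoint hequiv_a (a : Agent) (h h' : hist) : Prop :=
  match h, h' with
  | HInit w, HInit w' => sim E a w w'
  | HExt g s w, HExt g' s' w' => hequiv_a a g g' /\ s a = s' a /\ sim E a w w'
  | _, _ => False
  end.

Definition hequiv (C : set Agent) (h h' : hist) : Prop :=
  forall a, C a -> hequiv_a a h h'.

Definition profile (C : set Agent) : Type := {a : Agent | C a} -> V E.

Definition prof_agree (C : set Agent) (s : profile C) (s' : Agent -> V E)
  : Prop :=
  forall a (Ha : C a), s (exist _ a Ha) = s' a.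

Fixpoint sat (h : hist) (f : formula Agent) : Prop :=
  match f with
  | Var p => pi E p (hd h)
  | Neg g => ~ sat h g
  | Imp g k => sat h g -> sat h k
  | Kn C g => forall h', is_history h' -> hequiv C h h' -> sat h' g
  | Hw C g => exists s : profile C,
      forall h' s' w', is_history (HExt h' s' w') -> hequiv C h h' ->
        prof_agree s s' -> sat (HExt h' s' w') g
  end.

End Histories.

Arguments HInit {Agent E}.
Arguments HExt {Agent E}.

From mathcomp Require Import all_boot.
From mathcomp Require Import boolp classical_sets.

(* The epistemic axioms only use that [hequiv C] is an
   equivalence relation that shrinks as [C] grows.  For Cooperation, the
   strategies of the disjoint coalitions C and D are merged into one profile
   of C ∪ D.  For Perfect Recall, a nonempty coalition can only confuse an
   extended history with another extension, and the two prefixes are then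
   indistinguishable too.  Unachievability of Falsehood is the only axiom that
   needs regularity: the witness strategy, completed arbitrarily outside C,
   has a transition from the current state, so the extended history would
   have to satisfy falsehood. *)

Set Implicit Arguments.
Unset Strict Implicit.
Unset Printing Implicit Defensive.

Local Open Scope classical_set_scope.

Section Soundness.
Variables (Agent : Type) (E : ETS Agent).
Implicit Types (C D : set Agent) (a : Agent) (h g : hist E)
  (f k : formula Agent).

Lemma hequiv_a_refl a h : hequiv_a a h h.
Proof. by elim: h => [w|g IH s w] /=; do ?split=> //; exact: sim_refl. Qed.

Lemma hequiv_a_sym a h g : hequiv_a a h g -> hequiv_a a g h.
Proof.
elim: h g => [w|h IH s w] [w'|g s' w'] //=; first exact: sim_sym.
by move=> [hg [-> ww']]; do ?split; [exact: IH | exact: sim_sym].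
Qed.

Lemma hequiv_a_trans a h1 h2 h3 :
  hequiv_a a h1 h2 -> hequiv_a a h2 h3 -> hequiv_a a h1 h3.
Proof.
elim: h1 h2 h3 => [w1|h1 IH s1 w1] [w2|h2 s2 w2] [w3|h3 s3 w3] //=.
  exact: sim_trans.
move=> [h12 [-> w12]] [h23 [-> w23]].
by do ?split; [exact: IH h12 h23 | exact: sim_trans w12 w23].
Qed.

Lemma hequiv_refl C h : hequiv C h h.
Proof. by move=> a _; exact: hequiv_a_refl. Qed.

Lemma hequiv_sym C h g : hequiv C h g -> hequiv C g h.
Proof. by move=> hg a Ca; exact/hequiv_a_sym/hg. Qed.

Lemma hequiv_trans C h1 h2 h3 :
  hequiv C h1 h2 -> hequiv C h2 h3 -> hequiv C h1 h3.
Proof. by move=> h12 h23 a Ca; exact: hequiv_a_trans (h12 a Ca) (h23 a Ca). Qed.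

Lemma hequivS C D h g : C `<=` D -> hequiv D h g -> hequiv C h g.
Proof. by move=> CD hg a /CD; exact: hg. Qed.

Lemma hequiv_HExt C h s w g s' w' :
  hequiv C (HExt h s w) (HExt g s' w') ->
  hequiv C h g /\ forall a, C a -> s a = s' a.
Proof. by move=> hg; split=> a /hg[] // _ []. Qed.

Lemma hequiv_HExt_HInit C h s w w' :
  C !=set0 -> ~ hequiv C (HExt h s w) (HInit w').
Proof. by move=> [c Cc] /(_ c Cc). Qed.

Definition override C (s : profile E C) (t : Agent -> V E) : Agent -> V E :=
  fun a => match pselect (C a) with
           | left Ca => s (exist _ a Ca)
           | right _ => t a
           end.

Lemma override_in C (s : profile E C) t a (Ca : C a) :
  override s t a = s (exist _ a Ca).
Proof. by rewrite /override; case: pselect => // Ca'; congr s; exact: eq_exist. Qed.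

Lemma override_out C (s : profile E C) t a : ~ C a -> override s t a = t a.
Proof. by rewrite /override; case: pselect. Qed.

Lemma prof_agree_override C (s : profile E C) t : prof_agree s (override s t).
Proof. by move=> a Ca; rewrite (override_in _ _ Ca). Qed.

Lemma satP h f : reflect (sat h f) (peval (fun k => `[< sat h k >]) f).
Proof.
elim: f => [n|f IH|f IHf k IHk|C f _|C f _] /=; try exact: asboolP.
- by apply: (iffP negP) => nf /IH.
- by apply: (iffP implyP) => fk /IHf /fk /IHk.
Qed.

Definition valid f := forall h, is_history h -> sat h f.

Lemma valid_tautology f : tautology f -> valid f.
Proof. by move=> taut h _; exact/satP/taut. Qed.

Lemma valid_truth C f : valid (Imp (Kn C f) f).
Proof. by move=> h hh /= Kf; apply: Kf => //; exact: hequiv_refl. Qed.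

Lemma valid_negative_introspection C f :
  valid (Imp (Neg (Kn C f)) (Kn C (Neg (Kn C f)))).
Proof.
move=> h _ /= nKf g _ hg Kf; apply: nKf => g' hg' hg'g.
by apply: Kf => //; exact: hequiv_trans (hequiv_sym hg) hg'g.
Qed.

Lemma valid_distributivity C f k :
  valid (Imp (Kn C (Imp f k)) (Imp (Kn C f) (Kn C k))).
Proof. by move=> h _ /= Kfk Kf g hg hhg; exact: Kfk g hg hhg (Kf g hg hhg). Qed.

Lemma valid_monotonicity C D f : C `<=` D -> valid (Imp (Kn C f) (Kn D f)).
Proof. by move=> CD h _ /= Kf g hg hhg; apply: Kf => //; exact: hequivS hhg. Qed.

Lemma valid_strategic_introspection C f : valid (Imp (Hw C f) (Kn C (Hw C f))).
Proof.
move=> h _ /= [s Hs] g _ hg; exists s => g' s' w' hist_ext gg' agree.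
by apply: Hs => //; exact: hequiv_trans hg gg'.
Qed.

Lemma valid_cooperation C D f k : C `&` D = set0 ->
  valid (Imp (Hw C (Imp f k)) (Imp (Hw D f) (Hw (C `|` D) k))).
Proof.
move=> disjCD h _ /= [s1 H1] [s2 H2].
have DnC a : D a -> ~ C a by move=> Da Ca; have : (C `&` D) a by []; rewrite disjCD.
case: (V_nonempty E) => v.
exists (fun x => override s1 (override s2 (fun=> v)) (sval x)).
move=> g s' w' hext hg agree.
have hC : hequiv C h g by apply: hequivS hg => a; left.
have hD : hequiv D h g by apply: hequivS hg => a; right.
have agree1 : prof_agree s1 s'.
  by move=> a Ca; rewrite -(agree a (or_introl Ca)) /= (override_in _ _ Ca).
have agree2 : prof_agree s2 s'.
  move=> a Da; rewrite -(agree a (or_intror Da)) /= override_out; last exact: DnC.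
  by rewrite (override_in _ _ Da).
exact: H1 g s' w' hext hC agree1 (H2 g s' w' hext hD agree2).
Qed.

Lemma valid_empty_coalition f : valid (Imp (Kn set0 f) (Hw set0 f)).
Proof.
move=> h _ /= Kf; exists (fun x => match svalP x : False with end).
by move=> g s' w' hext _ _; apply: Kf => // a [].
Qed.

Lemma valid_perfect_recall C D f : D `<=` C -> C <> set0 ->
  valid (Imp (Hw D f) (Hw D (Kn C f))).
Proof.
move=> DC /eqP/set0P C0 h _ /= [s Hs]; exists s => g s' w' hext hg agree.
case=> [w''|g'' s'' w''] hext'' gg''; first by case: (hequiv_HExt_HInit C0 gg'').
have [g_g'' s'_s''] := hequiv_HExt gg''.
apply: Hs => //; first exact: hequiv_trans hg (hequivS DC g_g'').
by move=> a Da; rewrite agree s'_s''; last exact: DC.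
Qed.

Lemma valid_unachievability C : regular E -> valid (Neg (Hw C Bot)).
Proof.
move=> reg h hh /= [s Hs]; case: (V_nonempty E) => v.
have [w' Mw'] := reg (hd h) (override s (fun=> v)).
by apply: (Hs h _ w' (conj hh Mw') (@hequiv_refl C h) (prof_agree_override s _)).
Qed.

Lemma valid_necessitation C f : valid f -> valid (Kn C f).
Proof. by move=> vf h _ /= g hg _; exact: vf. Qed.

Lemma valid_strategic_necessitation C f : valid f -> valid (Hw C f).
Proof.
move=> vf h _ /=; case: (V_nonempty E) => v.
by exists (fun=> v) => g s' w' hext _ _; exact: vf.
Qed.

Lemma valid_modus_ponens f k : valid (Imp f k) -> valid f -> valid k.
Proof. by move=> vfk vf h hh; exact: vfk h hh (vf h hh). Qed.

Lemma derivable_valid f : regular E -> derivable f -> valid f.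
Proof.
move=> reg; elim=> {f}.
- exact: valid_tautology.
- exact: valid_truth.
- exact: valid_negative_introspection.
- exact: valid_distributivity.
- exact: valid_monotonicity.
- exact: valid_strategic_introspection.
- exact: valid_cooperation.
- exact: valid_empty_coalition.
- exact: valid_perfect_recall.
- by move=> C; exact: valid_unachievability.
- by move=> C f _; exact: valid_necessitation.
- by move=> C f _; exact: valid_strategic_necessitation.
- by move=> f k _ vfk _ vf; exact: valid_modus_ponens vfk vf.
Qed.

End Soundness.

Theorem theorem1 (Agent : Type) (phi : formula Agent) :
  derivable phi ->
  forall (E : ETS Agent), regular E ->
  forall h : hist E, is_history h -> sat h phi.
Proof. by move=> der_phi E reg; exact: derivable_valid. Qed.
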